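(* Let $q=p^n$ ($p$ any prime), $k\ge1$, $r=\gcd(k,q-1)$, $s=\gcd(k,q+1)$. Then, viewing $D_k$ as a map ${\mathbb F}_q\to{\mathbb F}_q$, $D_k({\mathbb F}_q)=\langle\mu_{(q-1)/r}\rangle\cup\langle\mu_{(q+1)/s}\rangle$.
   Context: $D_k\in\mathbb Z[x]$: $D_0=2$, $D_1=x$, $D_{k+2}=xD_{k+1}-D_k$ (so $D_k(u+1/u)=u^k+u^{-k}$). For $d$ not divisible by $p$, $\mu_d=\{a\in\overline{{\mathbb F}}_p^\times:a^d=1\}$ and $\langle\mu_d\rangle=\{a+1/a:a\in\mu_d\}$. *)

From HB Require Import structures.
From mathcomp Require Import all_boot all_order all_algebra.
Set Implicit Arguments. Unset Strict Implicit. Unset Printing Implicit Defensive.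
Import Order.TTheory GRing.Theory Num.Theory.
Local Open Scope ring_scope.

(* The pair (D_k, D_{k+1}) of Dickson polynomials in Z[x]:
   D_0 = 2, D_1 = x, D_{k+2} = x D_{k+1} - D_k. *)
Fixpoint dickson_pair (k : nat) : {poly int} * {poly int} :=
  match k with
  | 0%N => (2%:P, 'X)
  | k'.+1 => let (a, b) := dickson_pair k' in (b, 'X * b - a)
  end.

Definition dickson (k : nat) : {poly int} := (dickson_pair k).1.

Definition mu (K : fieldType) (d : nat) (a : K) : Prop := a ^+ d = 1.

Definition angle_mu (K : fieldType) (d : nat) (y : K) : Prop :=
  exists a : K, mu d a /\ y = a + a^-1.

(* F_q inside K (q a power of the characteristic): roots of X^q - X *)
Definition in_Fq (K : fieldType) (q : nat) (x : K) : Prop := x ^+ q = x.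

(* Over an algebraically closed field every x is u + 1/u with u <> 0, and
   D_k(u + 1/u) = u^k + u^-k.  Since the q-th power map is additive,
   (u + 1/u)^q = u^q + u^-q, so x lies in F_q iff u^q is u or 1/u, i.e. iff
   u^(q-1) = 1 or u^(q+1) = 1.  Hence D_k(F_q) is the set of v + 1/v with
   v = u^k for u in mu_(q-1) or mu_(q+1), and the k-th powers of mu_N are
   exactly mu_(N / gcd(k, N)). *)

From HB Require Import structures.
From mathcomp Require Import all_boot all_order all_algebra.
From mathcomp Require Import ring.
Set Implicit Arguments.
Unset Strict Implicit.
Unset Printing Implicit Defensive.

Import GRing.Theory.
Local Open Scope ring_scope.

Section Dickson.

Variables (K : fieldType) (u : K).
Hypothesis u_neq0 : u != 0.

Lemma dickson_pair_horner_add_inv k :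
  (map_poly intr (dickson_pair k).1).[u + u^-1] = u ^+ k + u ^- k /\
  (map_poly intr (dickson_pair k).2).[u + u^-1] = u ^+ k.+1 + u ^- k.+1.
Proof.
elim: k => [|k IHk] /=; first by rewrite map_polyC map_polyX !hornerE invr1.
case: (dickson_pair k) IHk => a b /= [Da Db]; split=> //.
rewrite rmorphB rmorphM /= map_polyX !hornerE Da Db -!exprVn !exprS.
by field.
Qed.

Lemma dickson_horner_add_inv k :
  (map_poly intr (dickson k)).[u + u^-1] = u ^+ k + u ^- k.
Proof. exact: (dickson_pair_horner_add_inv k).1. Qed.

End Dickson.

Lemma add_inv_inj (K : fieldType) (u w : K) : u != 0 -> w != 0 ->
  w + w^-1 = u + u^-1 -> w = u \/ w = u^-1.
Proof.
move=> u0 w0 Dw; have : (w - u) * (w * u - 1) = 0.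
  transitivity (w * u * ((w + w^-1) - (u + u^-1))); first by field; rewrite u0 w0.
  by rewrite Dw subrr mulr0.
move/eqP; rewrite mulf_eq0 !subr_eq0 => /orP[/eqP -> | /eqP wu1]; [by left | right].
by apply: (mulIf u0); rewrite wu1 mulVf.
Qed.

Lemma expr_eq1_neq0 (R : nzRingType) (x : R) N : (0 < N)%N -> x ^+ N = 1 -> x != 0.
Proof.
move=> N_gt0; apply: contra_eq_neq => ->.
by rewrite expr0n gtn_eqF // eq_sym oner_neq0.
Qed.

Lemma in_Fq_add_invE (K : fieldType) q (u : K) :
  [pchar K].-nat q -> u != 0 ->
  in_Fq q (u + u^-1) <-> u ^+ q.-1 = 1 \/ u ^+ q.+1 = 1.
Proof.
move=> qK u0; have Fq : (u + u^-1) ^+ q = u ^+ q + (u ^+ q)^-1.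
  by rewrite exprDn_pchar // exprVn.
have uq0 : u ^+ q != 0 by rewrite expf_neq0.
have q_gt0 : (0 < q)%N by case/andP: qK.
have uqE : u ^+ q = u ^+ q.-1 * u by rewrite -exprSr prednK.
rewrite /in_Fq Fq; split=> [/(add_inv_inj u0 uq0) [] Duq | [] uq1].
- by left; apply: (mulIf u0); rewrite -uqE mul1r.
- by right; rewrite exprSr Duq mulVf.
- by rewrite uqE uq1 mul1r.
- have -> : u ^+ q = u^-1 by apply: (mulIf u0); rewrite -exprSr uq1 mulVf.
  by rewrite invrK addrC.
Qed.

Lemma closed_exists_add_inv (K : closedFieldType) (x : K) :
  exists2 u : K, u != 0 & x = u + u^-1.
Proof.
have /closed_rootP[u /rootP] : size (('X - x%:P) * 'X + 1%:P : {poly K}) != 1.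
  by rewrite size_MXaddC oner_eq0 andbF size_XsubC.
rewrite !hornerE => ux.
have u0 : u != 0 by apply: contra_eq_neq ux => ->; rewrite mulr0 add0r oner_neq0.
exists u => //; apply: (mulIf u0); rewrite mulrDl mulVf //.
by rewrite -[LHS]addr0 -ux; ring.
Qed.

Lemma closed_exists_rootn (K : closedFieldType) n (c : K) :
  (0 < n)%N -> exists u : K, u ^+ n = c.
Proof.
move=> n_gt0; have /closed_rootP[u /rootP] : size ('X^n - c%:P : {poly K}) != 1.
  by rewrite size_XnsubC // eqSS -lt0n.
by rewrite !hornerE => /subr0_eq; exists u.
Qed.

Lemma expr_coprime_root (R : pzRingType) (a : R) k m :
  (0 < k)%N -> coprime k m -> a ^+ m = 1 -> exists2 c : R, c ^+ m = 1 & c ^+ k = a.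
Proof.
move=> k_gt0 co_km am1; case: (egcdnP m k_gt0) => u v Duv _.
exists (a ^+ u); first by rewrite exprAC am1 expr1n.
by rewrite -exprM Duv (eqP co_km) exprD expr1 mulnC exprM am1 expr1n mul1r.
Qed.

Lemma expr_divn_gcd_eq1 (R : pzRingType) (u : R) N k :
  u ^+ N = 1 -> (u ^+ k) ^+ (N %/ gcdn k N) = 1.
Proof. by move=> uN1; rewrite -exprM muln_divCA_gcd exprM uN1 expr1n. Qed.

Lemma coprime_divn_gcd k N :
  (0 < k)%N -> coprime (k %/ gcdn k N) (N %/ gcdn k N).
Proof.
move=> k_gt0; have g_gt0 : (0 < gcdn k N)%N by rewrite gcdn_gt0 k_gt0.
by rewrite /coprime -(eqn_pmul2r g_gt0) muln_gcdl !divnK ?dvdn_gcdl ?dvdn_gcdr ?mul1n.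
Qed.

Lemma closed_rootn_expr_divn_gcd (K : closedFieldType) N k (a : K) :
  (0 < N)%N -> (0 < k)%N -> a ^+ (N %/ gcdn k N) = 1 ->
  exists2 u : K, u ^+ N = 1 & u ^+ k = a.
Proof.
move=> N_gt0 k_gt0 a1; have g_gt0 : (0 < gcdn k N)%N by rewrite gcdn_gt0 k_gt0.
have k'_gt0 : (0 < k %/ gcdn k N)%N by rewrite divn_gt0 // dvdn_leq ?dvdn_gcdl.
have [c c1 ca] := expr_coprime_root k'_gt0 (coprime_divn_gcd N k_gt0) a1.
have [u ug] := closed_exists_rootn c g_gt0.
exists u; first rewrite -(divnK (dvdn_gcdr k N)).
  by rewrite mulnC exprM ug.
by rewrite -(divnK (dvdn_gcdl k N)) mulnC exprM ug.
Qed.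

Lemma angle_mu_divn_gcdP (K : closedFieldType) N k (y : K) :
  (0 < N)%N -> (0 < k)%N ->
  angle_mu (N %/ gcdn k N) y <-> exists2 u : K, u ^+ N = 1 & y = u ^+ k + u ^- k.
Proof.
move=> N_gt0 k_gt0; split=> [[a [a1 ->]] | [u u1 ->]].
  by have [u u1 <-] := closed_rootn_expr_divn_gcd N_gt0 k_gt0 a1; exists u.
by exists (u ^+ k); split=> //; apply: expr_divn_gcd_eq1.
Qed.

Theorem proposition2p4 (K : closedFieldType) (p n k : nat)
    (hp : prime p) (hchar : p \in [pchar K]) (hn : (0 < n)%N) (hk : (0 < k)%N) :
  let q := (p ^ n)%N in
  let r := gcdn k q.-1 in
  let s := gcdn k q.+1 in
  forall y : K,
    (exists x : K, in_Fq q x /\ y = (map_poly intr (dickson k)).[x]) <->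
    (angle_mu (q.-1 %/ r) y \/ angle_mu (q.+1 %/ s) y).
Proof.
move=> q r s y.
have q_gt1 : (1 < q)%N by rewrite -(expn0 p) ltn_exp2l ?prime_gt1.
have q1_gt0 : (0 < q.-1)%N by rewrite -ltnS prednK // ltnW.
have qK : [pchar K].-nat q by rewrite pnatX (pnatE _ hp) hchar.
rewrite !angle_mu_divn_gcdP //; split=> [[x [xq ->]] | Dy].
  have [u u0 Dx] := closed_exists_add_inv x.
  move: xq; rewrite Dx dickson_horner_add_inv // => /(in_Fq_add_invE qK u0).
  by case=> u1; [left | right]; exists u.
have [u u0 [uq Du]] : exists2 u : K, u != 0 &
    (u ^+ q.-1 = 1 \/ u ^+ q.+1 = 1) /\ y = u ^+ k + u ^- k.
  case: Dy => -[u u1 ->]; exists u.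
  - exact: expr_eq1_neq0 q1_gt0 u1.
  - by split; [left |].
  - exact: expr_eq1_neq0 (ltn0Sn _) u1.
  - by split; [right |].
exists (u + u^-1); rewrite dickson_horner_add_inv //.
by split=> //; apply/(in_Fq_add_invE qK u0).
Qed.
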